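(* Let $c_{\mathrm{TX}}>0$, $\phi>0$, $\theta=\phi/c_{\mathrm{TX}}$, $B\geq1$ an integer, $0<\lambda\leq\lambda_{\mathrm{th}}=\frac{1}{(1+\sqrt{\theta})^2}$, and $$v_{\mathrm{th}}(\lambda,0)=\sqrt{\lambda\theta}+\frac{\lambda}{2}+\sqrt{\lambda}\sqrt{\sqrt{\lambda\theta}+\frac{\lambda}{4}}.$$ For $V_k\in(0,1]$, let $(t^{(MP)}(V_k),S_M^{(MP)}(V_k))$ be the myopic policy in the zero-ambient-noise case, i.e. a (possibly randomized among minimizers) minimizer over $t\in\{0,1,\dots,B\}$, $S_M\geq 0$ of $$\frac{V_k}{1+V_ktS_M}+\lambda t(1+\theta S_M).$$ Then: (i) if $V_k>v_{\mathrm{th}}(\lambda,0)$, then $t^{(MP)}(V_k)=1$ and $S_M^{(MP)}(V_k)=\frac{1}{\sqrt{\lambda\theta}}-\frac{1}{V_k}$; (ii) if $V_k<v_{\mathrm{th}}(\lambda,0)$, then $t^{(MP)}(V_k)=S_M^{(MP)}(V_k)=0$; (iii) if $V_k=v_{\mathrm{th}}(\lambda,0)$, then $t^{(MP)}(V_k)=1$, $S_M^{(MP)}(V_k)=\frac{1}{\sqrt{\lambda\theta}}-\frac{1}{V_k}$ with probability $p_0$, and $t^{(MP)}(V_k)=0$, $S_M^{(MP)}(V_k)=0$ with probability $1-p_0$, for some $p_0\in[0,1]$.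
   Context: This is the coordinated scheme with infinite ambient SNR ($S_A=\infty$): activating $t$ sensors each with local measurement SNR $S_M$ yields aggregate SNR $tS_M$, and the posterior variance given prior variance $V_k$ is $V_k/(1+V_ktS_M)$. Each active sensor costs $c_{\mathrm{TX}}+\phi S_M$; $\lambda$ is a Lagrange multiplier. *)

From Stdlib Require Import Reals Lra Lia.
Open Scope R_scope.

Definition obj (lam theta V : R) (t : nat) (S : R) : R :=
  V / (1 + V * INR t * S) + lam * INR t * (1 + theta * S).

(* Feasible actions: t in {0,...,B}, S >= 0; by convention S = 0 when no
   sensor is active (t = 0), since S is then irrelevant. *)
Definition feasible (B : nat) (t : nat) (S : R) : Prop :=
  (t <= B)%nat /\ 0 <= S /\ (t = 0%nat -> S = 0).

Definition is_myopic (lam theta : R) (B : nat) (V : R) (t : nat) (S : R) : Prop :=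
  feasible B t S /\
  forall t' S', feasible B t' S' -> obj lam theta V t S <= obj lam theta V t' S'.

Definition lam_th (theta : R) : R := 1 / (1 + sqrt theta) ^ 2.

Definition v_th (lam theta : R) : R :=
  sqrt (lam * theta) + lam / 2 + sqrt lam * sqrt (sqrt (lam * theta) + lam / 4).

(* With [x = t S] the objective reads [V/(1+Vx) + λθ x + λ t], so the SNR only
   enters through the aggregate [x].  Writing [s = √(λθ)], the identity
   [V/(1+Vx) + s²x - (2s - s²/V) = (V - s(1+Vx))² / ((1+Vx)V)] shows that any
   active configuration costs at least [2s - s²/V + λt], with equality only for
   [t = 1] and [x = 1/s - 1/V] (feasible iff [s < V]).  Idling costs [V], and if
   [V ≤ s] every active configuration costs more than [V].  Comparing [V] with
   the best active cost [2s - s²/V + λ] is a quadratic inequality in [V] whose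
   relevant root is [v_th]. *)
From Stdlib Require Import Reals Lra Psatz.
Open Scope R_scope.

Definition snr_cost (V c x : R) : R := V / (1 + V * x) + c * x.

Definition active_min (lam theta V : R) : R :=
  2 * sqrt (lam * theta) - lam * theta / V + lam.

Definition snr_opt (lam theta V : R) : R := 1 / sqrt (lam * theta) - 1 / V.

Section SnrCost.

Variables V s : R.
Hypothesis HV : 0 < V.
Hypothesis Hs : 0 < s.

Lemma snr_cost_sub_lower (x : R) : 0 <= x ->
  snr_cost V (s * s) x - (2 * s - s * s / V)
  = (V - s * (1 + V * x)) ^ 2 / ((1 + V * x) * V).
Proof. intros Hx; unfold snr_cost; field; nra. Qed.

Lemma snr_cost_ge_lower (x : R) : 0 <= x ->
  2 * s - s * s / V <= snr_cost V (s * s) x.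
Proof.
  intros Hx.
  assert (0 <= (V - s * (1 + V * x)) ^ 2 / ((1 + V * x) * V)).
  { apply Rle_mult_inv_pos; [apply pow2_ge_0 | nra]. }
  rewrite <- snr_cost_sub_lower in * by exact Hx; lra.
Qed.

Lemma snr_cost_le_lower (x : R) : 0 <= x ->
  snr_cost V (s * s) x <= 2 * s - s * s / V -> x = 1 / s - 1 / V.
Proof.
  intros Hx Hle.
  assert (Hd : 0 < (1 + V * x) * V) by nra.
  assert (Hq : (V - s * (1 + V * x)) ^ 2 / ((1 + V * x) * V) <= 0)
    by (rewrite <- snr_cost_sub_lower by exact Hx; lra).
  assert (Hsq : (V - s * (1 + V * x)) ^ 2 <= 0).
  { replace ((V - s * (1 + V * x)) ^ 2)
      with ((V - s * (1 + V * x)) ^ 2 / ((1 + V * x) * V) * ((1 + V * x) * V))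
      by (field; nra).
    nra. }
  assert (Heq : V = s * (1 + V * x)) by nra.
  replace x with ((s * (1 + V * x) - s) / (s * V)) by (field; lra).
  rewrite <- Heq; field; lra.
Qed.

Lemma snr_cost_opt : snr_cost V (s * s) (1 / s - 1 / V) = 2 * s - s * s / V.
Proof.
  unfold snr_cost.
  replace (1 + V * (1 / s - 1 / V)) with (V / s) by (field; lra).
  field; lra.
Qed.

Lemma snr_cost_ge_prior (x : R) : V <= s -> 0 <= x -> V <= snr_cost V (s * s) x.
Proof.
  intros HVs Hx.
  assert (E : snr_cost V (s * s) x - V
              = x * (s * s * (1 + V * x) - V * V) / (1 + V * x))
    by (unfold snr_cost; field; nra).
  assert (0 <= x * (s * s * (1 + V * x) - V * V) / (1 + V * x)).
  { assert (V * V <= s * s) by nra.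
    assert (0 <= s * s * (V * x)) by (apply Rmult_le_pos; nra).
    apply Rle_mult_inv_pos; [apply Rmult_le_pos | ]; nra. }
  lra.
Qed.

End SnrCost.

Lemma obj_idle (lam theta V S : R) : obj lam theta V 0 S = V.
Proof.
  unfold obj; simpl INR.
  replace (1 + V * 0 * S) with 1 by ring.
  field.
Qed.

Lemma obj_split (lam theta V : R) (t : nat) (S : R) :
  obj lam theta V t S = snr_cost V (lam * theta) (INR t * S) + lam * INR t.
Proof. unfold obj, snr_cost; rewrite Rmult_assoc; ring. Qed.

Lemma feasible_idle (B : nat) (S : R) : feasible B 0 S <-> S = 0.
Proof.
  split; [intros [_ [_ H0]]; auto | intros ->; repeat split; [apply Nat.le_0_l | lra]].
Qed.

Lemma is_myopic_iff_le (lam theta V m : R) (B : nat) (t : nat) (S : R) :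
  (forall t' S', feasible B t' S' -> m <= obj lam theta V t' S') ->
  (exists t' S', feasible B t' S' /\ obj lam theta V t' S' <= m) ->
  is_myopic lam theta B V t S <-> feasible B t S /\ obj lam theta V t S <= m.
Proof.
  intros Hlow [t0 [S0 [Hf0 Hm0]]]; split.
  - intros [Hf Hmin]; split; [exact Hf |].
    specialize (Hmin t0 S0 Hf0); lra.
  - intros [Hf Hm]; split; [exact Hf |].
    intros t' S' Hf'; specialize (Hlow t' S' Hf'); lra.
Qed.

Section Myopic.

Variables lam theta V : R.
Variable B : nat.
Hypothesis Hlam : 0 < lam.
Hypothesis Htheta : 0 < theta.
Hypothesis HV : 0 < V.
Hypothesis HB : (1 <= B)%nat.

Let s := sqrt (lam * theta).

Let s_pos : 0 < s.
Proof. apply sqrt_lt_R0; nra. Qed.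

Let s_sqr : s * s = lam * theta.
Proof. apply sqrt_sqrt; nra. Qed.

Let INR_ge_1 (t : nat) : (1 <= t)%nat -> 1 <= INR t.
Proof. intros Ht; apply le_INR in Ht; exact Ht. Qed.

Lemma obj_active_ge (t : nat) (S : R) : (1 <= t)%nat -> 0 <= S ->
  active_min lam theta V <= obj lam theta V t S.
Proof.
  intros Ht HS; pose proof (INR_ge_1 t Ht).
  pose proof (snr_cost_ge_lower V s HV (INR t * S) ltac:(nra)).
  rewrite obj_split; unfold active_min; fold s; rewrite <- s_sqr; nra.
Qed.

Lemma obj_active_le (t : nat) (S : R) : (1 <= t)%nat -> 0 <= S ->
  obj lam theta V t S <= active_min lam theta V ->
  t = 1%nat /\ S = snr_opt lam theta V.
Proof.
  intros Ht HS Hle; pose proof (INR_ge_1 t Ht).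
  pose proof (snr_cost_ge_lower V s HV (INR t * S) ltac:(nra)).
  rewrite obj_split in Hle; unfold active_min in Hle; fold s in Hle; rewrite <- s_sqr in Hle.
  assert (Ht1 : INR t = 1) by nra.
  assert (t = 1%nat) as -> by (apply INR_eq; exact Ht1).
  split; [reflexivity |].
  simpl INR in Hle; rewrite Rmult_1_l in Hle.
  apply (snr_cost_le_lower V s HV s_pos S HS); lra.
Qed.

Lemma obj_active_gt_idle (t : nat) (S : R) : V <= s -> (1 <= t)%nat -> 0 <= S ->
  V < obj lam theta V t S.
Proof.
  intros HVs Ht HS; pose proof (INR_ge_1 t Ht).
  pose proof (snr_cost_ge_prior V s HV s_pos (INR t * S) HVs ltac:(nra)).
  rewrite obj_split, <- s_sqr; nra.
Qed.

Lemma snr_opt_feasible : s < V -> feasible B 1 (snr_opt lam theta V).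
Proof.
  intros HsV; repeat split; [exact HB | | discriminate].
  unfold snr_opt; fold s.
  assert (/ V < / s) by (apply Rinv_lt_contravar; nra).
  unfold Rdiv; lra.
Qed.

Lemma obj_snr_opt : obj lam theta V 1 (snr_opt lam theta V) = active_min lam theta V.
Proof.
  rewrite obj_split; simpl INR; rewrite Rmult_1_l, <- s_sqr.
  unfold snr_opt, active_min; fold s.
  rewrite snr_cost_opt by (exact HV || exact s_pos); rewrite s_sqr; ring.
Qed.

Lemma is_myopic_low_prior (t : nat) (S : R) : V <= s ->
  is_myopic lam theta B V t S <-> t = 0%nat /\ S = 0.
Proof.
  intros HVs.
  rewrite (is_myopic_iff_le lam theta V V).
  - split.
    + intros [Hf Hle]; destruct t as [| t].
      * split; [reflexivity | exact (proj1 (feasible_idle B S) Hf)].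
      * destruct Hf as [_ [HS _]].
        pose proof (obj_active_gt_idle (Datatypes.S t) S HVs (Nat.lt_0_succ _) HS); lra.
    + intros [-> ->]; split; [apply feasible_idle; reflexivity | rewrite obj_idle; lra].
  - intros [| t'] S' [_ [HS' _]]; [rewrite obj_idle; lra |].
    pose proof (obj_active_gt_idle (Datatypes.S t') S' HVs (Nat.lt_0_succ _) HS'); lra.
  - exists 0%nat, 0; split; [apply feasible_idle; reflexivity | rewrite obj_idle; lra].
Qed.

Lemma is_myopic_high_prior (t : nat) (S : R) : s < V ->
  is_myopic lam theta B V t S <->
  (t = 0%nat /\ S = 0 /\ V <= active_min lam theta V) \/
  (t = 1%nat /\ S = snr_opt lam theta V /\ active_min lam theta V <= V).
Proof.
  intros HsV.
  pose proof (Rmin_l V (active_min lam theta V)).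
  pose proof (Rmin_r V (active_min lam theta V)).
  rewrite (is_myopic_iff_le lam theta V (Rmin V (active_min lam theta V))).
  - split.
    + intros [Hf Hle]; destruct t as [| t].
      * rewrite obj_idle in Hle; left.
        split; [reflexivity | split; [exact (proj1 (feasible_idle B S) Hf) | lra]].
      * destruct Hf as [_ [HS _]]; right.
        pose proof (obj_active_ge (Datatypes.S t) S (Nat.lt_0_succ _) HS).
        destruct (obj_active_le (Datatypes.S t) S (Nat.lt_0_succ _) HS ltac:(lra)) as [Ht HSopt].
        split; [exact Ht | split; [exact HSopt | lra]].
    + intros [[-> [-> Hle]] | [-> [-> Hle]]].
      * split; [apply feasible_idle; reflexivity |].
        rewrite obj_idle, Rmin_left by exact Hle; lra.
      * split; [apply snr_opt_feasible; exact HsV |].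
        rewrite obj_snr_opt, Rmin_right by exact Hle; lra.
  - intros [| t'] S' [_ [HS' _]]; [rewrite obj_idle; lra |].
    pose proof (obj_active_ge (Datatypes.S t') S' (Nat.lt_0_succ _) HS'); lra.
  - destruct (Rle_dec V (active_min lam theta V)).
    + exists 0%nat, 0; split; [apply feasible_idle; reflexivity |].
      rewrite obj_idle, Rmin_left by assumption; lra.
    + exists 1%nat, (snr_opt lam theta V).
      split; [apply snr_opt_feasible; exact HsV |].
      rewrite obj_snr_opt, Rmin_right by lra; lra.
Qed.

Let r := sqrt lam * sqrt (s + lam / 4).

Let r_sqr : r * r = lam * (s + lam / 4).
Proof.
  unfold r.
  replace (sqrt lam * sqrt (s + lam / 4) * (sqrt lam * sqrt (s + lam / 4)))
    with ((sqrt lam * sqrt lam) * (sqrt (s + lam / 4) * sqrt (s + lam / 4))) by ring.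
  rewrite !sqrt_sqrt; lra.
Qed.

Let r_ge : lam / 2 <= r.
Proof.
  assert (0 <= r) by (apply Rmult_le_pos; apply sqrt_pos).
  nra.
Qed.

Let v_th_split : v_th lam theta = s + lam / 2 + r.
Proof. reflexivity. Qed.

Lemma active_min_gap :
  V * (V - active_min lam theta V) = (V - s - lam / 2) ^ 2 - r * r.
Proof.
  rewrite r_sqr; unfold active_min; fold s; rewrite <- s_sqr.
  field; lra.
Qed.

Lemma v_th_lt_prior : v_th lam theta < V -> s < V /\ active_min lam theta V < V.
Proof.
  rewrite v_th_split; intros Hlt.
  pose proof active_min_gap.
  split; nra.
Qed.

Lemma v_th_eq_prior : V = v_th lam theta -> s < V /\ active_min lam theta V = V.
Proof.
  rewrite v_th_split; intros Heq.
  pose proof active_min_gap.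
  assert (V * (V - active_min lam theta V) = 0) by (rewrite Heq in *; nra).
  split; nra.
Qed.

Lemma prior_lt_v_th : V < v_th lam theta ->
  V <= s \/ (s < V /\ V < active_min lam theta V).
Proof.
  rewrite v_th_split; intros Hlt.
  destruct (Rle_or_lt V s) as [HVs | HsV]; [left; exact HVs | right].
  pose proof active_min_gap.
  assert ((V - s - lam / 2) ^ 2 < r * r) by nra.
  split; [exact HsV | nra].
Qed.

Lemma is_myopic_above_v_th (t : nat) (S : R) : v_th lam theta < V ->
  is_myopic lam theta B V t S <-> t = 1%nat /\ S = snr_opt lam theta V.
Proof.
  intros Hcmp; destruct (v_th_lt_prior Hcmp) as [HsV Hcost].
  rewrite (is_myopic_high_prior t S HsV); split.
  - intros [[_ [_ Hle]] | [Ht [HS _]]]; [lra | split; assumption].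
  - intros [Ht HS]; right; repeat split; [assumption | assumption | lra].
Qed.

Lemma is_myopic_below_v_th (t : nat) (S : R) : V < v_th lam theta ->
  is_myopic lam theta B V t S <-> t = 0%nat /\ S = 0.
Proof.
  intros Hcmp; destruct (prior_lt_v_th Hcmp) as [HVs | [HsV Hcost]].
  - exact (is_myopic_low_prior t S HVs).
  - rewrite (is_myopic_high_prior t S HsV); split.
    + intros [[Ht [HS _]] | [_ [_ Hle]]]; [split; assumption | lra].
    + intros [Ht HS]; left; repeat split; [assumption | assumption | lra].
Qed.

Lemma is_myopic_at_v_th (t : nat) (S : R) : V = v_th lam theta ->
  is_myopic lam theta B V t S <->
  (t = 1%nat /\ S = snr_opt lam theta V) \/ (t = 0%nat /\ S = 0).
Proof.
  intros Hcmp; destruct (v_th_eq_prior Hcmp) as [HsV Hcost].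
  rewrite (is_myopic_high_prior t S HsV), Hcost; split.
  - intros [[Ht [HS _]] | [Ht [HS _]]]; [right | left]; split; assumption.
  - intros [[Ht HS] | [Ht HS]]; [right | left]; repeat split; (assumption || lra).
Qed.

End Myopic.

Theorem corollary1 (cTX phi : R) (B : nat) (lam V : R) :
  0 < cTX -> 0 < phi -> (1 <= B)%nat ->
  0 < lam -> lam <= lam_th (phi / cTX) ->
  0 < V -> V <= 1 ->
  (V > v_th lam (phi / cTX) ->
     forall t S, is_myopic lam (phi / cTX) B V t S <->
       (t = 1%nat /\ S = 1 / sqrt (lam * (phi / cTX)) - 1 / V)) /\
  (V < v_th lam (phi / cTX) ->
     forall t S, is_myopic lam (phi / cTX) B V t S <-> (t = 0%nat /\ S = 0)) /\
  (V = v_th lam (phi / cTX) ->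
     forall t S, is_myopic lam (phi / cTX) B V t S <->
       ((t = 1%nat /\ S = 1 / sqrt (lam * (phi / cTX)) - 1 / V) \/
        (t = 0%nat /\ S = 0))).
Proof.
  intros Hc Hp HB Hlam _ HV _.
  assert (Htheta : 0 < phi / cTX) by (apply Rdiv_lt_0_compat; lra).
  split; [| split]; intros Hcmp t S.
  - exact (is_myopic_above_v_th lam (phi / cTX) V B Hlam Htheta HV HB t S Hcmp).
  - exact (is_myopic_below_v_th lam (phi / cTX) V B Hlam Htheta HV HB t S Hcmp).
  - exact (is_myopic_at_v_th lam (phi / cTX) V B Hlam Htheta HV HB t S Hcmp).
Qed.
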